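(* Let $x\in\mathbb{R}$ and let $f:\mathbb{R}\to\mathbb{R}$ be analytic and nonzero on the closed interval between $0$ and $x$, with $f(0)=1$, and suppose $f(y)=\exp\big(\sum_{i=1}^{\infty}c_i y^i\big)$ for all $y$ in that interval, the series converging there; put $f_k(y)=\exp(c_k y^k)$. For $r>1$ and a finite nonempty $\mathcal{S}\subset\mathbb{N}^*$ define, for $n\ge|\mathcal{S}|$, \[ x_n(\mathcal{S},r,x)=\Big[\prod_{j\in\mathcal{S}}(r^j-1)^{1/j}\Big]\frac{x}{r^n},\qquad \mathcal{P}_f(\mathcal{S},r,x)=\prod_{n=|\mathcal{S}|}^{\infty}\Big[f\big(x_n(\mathcal{S},r,x)\big)\Big]^{\binom{n-1}{|\mathcal{S}|-1}}. \] Then for every positive integer $k$, \[ f_k(x)=\lim_{r\downarrow1}\ \frac{\prod_{\mathcal{S}_k:\ |\mathcal{S}_k|\text{ odd}}\mathcal{P}_f(\mathcal{S}_k,r,x)}{\prod_{\mathcal{S}_k:\ |\mathcal{S}_k|\text{ even}}\mathcal{P}_f(\mathcal{S}_k,r,x)}, \] where $\mathcal{S}_k$ ranges over the subsets of $\mathbb{N}^*$ whose largest element is $k$.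
   Context: $\mathbb{N}^*$ is the set of positive integers and $|\mathcal{S}|$ is the cardinality of $\mathcal{S}$. The $c_i$ are the Taylor coefficients at $0$ of $\log f$ and $f_k$ is called the $k$-th component of $f$. *)

From HB Require Import structures.
From mathcomp Require Import all_boot all_order all_algebra.
From mathcomp Require Import all_classical all_reals all_analysis.
Set Implicit Arguments. Unset Strict Implicit. Unset Printing Implicit Defensive.
Import Order.TTheory GRing.Theory Num.Theory.
Import numFieldNormedType.Exports.
Local Open Scope classical_set_scope.
Local Open Scope ring_scope.

Section Defs.
Variable R : realType.

Definition between0 (x : R) : set R := [set y | Num.min 0 x <= y <= Num.max 0 x].

Definition analytic_at (f : R -> R) (y : R) : Prop :=
  exists2 d : R, 0 < d & exists a : nat -> R,
    forall z, `|z - y| < d ->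
      (fun N => \sum_(0 <= n < N) a n * (z - y) ^+ n) @ \oo --> f z.

Definition logf_partial (c : nat -> R) (y : R) (N : nat) : R :=
  \sum_(1 <= i < N) c i * y ^+ i.

Definition f_component (c : nat -> R) (k : nat) (y : R) : R := expR (c k * y ^+ k).

(* A subset S of N* with max S = k is encoded as  A : {set 'I_k.+1}  with
   ord_max \in A and ord0 \notin A; element j : 'I_k.+1 stands for nat j. *)
Definition max_is_k (k : nat) (A : {set 'I_k.+1}) : bool :=
  (ord_max \in A) && (ord0 \notin A).

Definition x_n (k : nat) (A : {set 'I_k.+1}) (r x : R) (n : nat) : R :=
  (\prod_(j in A) ((r ^+ j - 1) `^ ((j : nat)%:R^-1))) * x / r ^+ n.

Definition Pf_partial (f : R -> R) (k : nat) (A : {set 'I_k.+1}) (r x : R) (N : nat) : R :=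
  \prod_(#|A| <= n < N) f (x_n A r x n) ^+ 'C(n.-1, #|A|.-1).

Definition Pf (f : R -> R) (k : nat) (A : {set 'I_k.+1}) (r x : R) : R :=
  limn (Pf_partial f A r x).

Definition Pf_ratio (f : R -> R) (k : nat) (r x : R) : R :=
  (\prod_(A : {set 'I_k.+1} | max_is_k A && odd #|A|) Pf f A r x) /
  (\prod_(A : {set 'I_k.+1} | max_is_k A && ~~ odd #|A|) Pf f A r x).

End Defs.

From HB Require Import structures.
From mathcomp Require Import all_boot all_order all_algebra.
From mathcomp Require Import all_classical all_reals all_analysis.
From mathcomp Require Import ring lra zify.
Import Order.TTheory GRing.Theory Num.Theory.
Import numFieldNormedType.Exports.
Local Open Scope classical_set_scope.
Local Open Scope ring_scope.

(* Taking logarithms, log P_f(S, r, x) = sum_(n >= s) C(n-1, s-1) log f(x_n) with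
   s = |S| and x_n = lam x r^-n, lam = prod_(j in S) (r^j - 1)^(1/j).  Since
   sum_(n >= s) C(n-1, s-1) t^n = (t / (1 - t))^s, the monomial c_i y^i of log f
   contributes c_i x^i prod_(j in S) (r^j - 1)^(i/j) / (r^i - 1); the factor
   for j = i is 1 and the factors for j < i tend to 0 as r decreases to 1.
   Summed with the signs (-1)^(|S|-1) over the S with max S = k, these products
   factor as h_k prod_(0 < j < k) (1 - h_j): the total vanishes for i < k and
   tends to 1 for i = k.  The terms of degree > k are bounded, uniformly in n,
   by the tail of a geometric series and contribute a multiple of
   prod_(j in S) (r^j - 1)^((k+1)/j) / (r^(k+1) - 1), which tends to 0. *)

Set Implicit Arguments.
Unset Strict Implicit.
Unset Printing Implicit Defensive.

Section binomial_series.
Variable R : realType.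
Implicit Types (t : R) (u v : R ^nat).

Lemma cvg_affine_recursion u v t m N0 : 0 <= t < 1 -> nondecreasing_seq u ->
  v @ \oo --> m -> (forall N, (N0 <= N)%N -> u N.+1 = t * (u N + v N)) ->
  u @ \oo --> t * m / (1 - t).
Proof.
move=> /andP[t0 t1] u_nd vm u_rec.
have [M vM] : exists M, forall n, v n <= M.
  have /cvg_seq_bounded/bounded_fun_has_ubound[M vM] : cvgn v by apply/cvg_ex; exists m.
  by exists M => n; apply: vM; exists n.
have u_le N : (N0 <= N)%N -> u N <= t * M / (1 - t).
  move=> N0N; rewrite ler_pdivlMr ?subr_gt0 //.
  have := u_nd _ _ (leqnSn N); rewrite u_rec // => h.
  have : t * v N <= t * M by rewrite ler_wpM2l.
  lra.
have /cvg_ex[l ul] : cvgn u.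
  apply: nondecreasing_is_cvgn => //; exists (t * M / (1 - t)) => _ [n _ <-].
  have [N0n|nN0] := leqP N0 n; first exact: u_le.
  exact: le_trans (u_nd _ _ (ltnW nN0)) (u_le N0 (leqnn _)).
have uSl : (fun N => u N.+1) @ \oo --> l by rewrite cvg_shiftS.
have uSl' : (fun N => u N.+1) @ \oo --> t * (l + m).
  apply: cvg_trans (cvgM (cvg_cst t) (cvgD ul vm)); apply: near_eq_cvg.
  by near=> N; rewrite /= u_rec //; near: N; exact: nbhs_infty_ge.
have l_fix : l = t * (l + m) by exact: cvg_unique uSl uSl'.
suff -> : t * m / (1 - t) = l by [].
apply: (canLR (mulfK _)); first by rewrite subr_eq0 gt_eqF.
lra.
Unshelve. all: by end_near.
Qed.

Definition binom_psum t s N := \sum_(s <= n < N) 'C(n.-1, s.-1)%:R * t ^+ n.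

Lemma binom_psumS t s N : (s <= N)%N ->
  binom_psum t s N.+1 = binom_psum t s N + 'C(N.-1, s.-1)%:R * t ^+ N.
Proof. by move=> sN; rewrite /binom_psum big_nat_recr. Qed.

Lemma binom_psum_nd t s : 0 <= t -> nondecreasing_seq (binom_psum t s).
Proof.
move=> t0; apply/nondecreasing_seqP => N.
have [sN|Ns] := leqP s N; first by rewrite binom_psumS // lerDl mulr_ge0 ?exprn_ge0.
by rewrite /binom_psum !big_geq // ltnW.
Qed.

Lemma binom_psum1_rec t N : (1 <= N)%N ->
  binom_psum t 1 N.+1 = t * (binom_psum t 1 N + 1).
Proof.
move=> N1; rewrite /binom_psum big_nat_recl // mulrDr mulr_sumr addrC /=.
congr (_ + _); last by rewrite mul1r expr1 mulr1.
by apply: eq_bigr => n _; rewrite !bin0 exprS; ring.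
Qed.

(* Pascal's rule 'C(n, s) = 'C(n.-1, s) + 'C(n.-1, s.-1), summed against t ^+ n. *)
Lemma binom_psumS_rec t s N : (0 < s)%N -> (s < N)%N ->
  binom_psum t s.+1 N.+1 = t * (binom_psum t s.+1 N + binom_psum t s N).
Proof.
move=> s0 /subnK <-; elim: (N - s.+1)%N => [|d IH].
  rewrite add0n binom_psumS // [binom_psum t s _]binom_psumS // /binom_psum !big_geq //=.
  by rewrite binn -(prednK s0) binn /= exprS; ring.
rewrite addSn binom_psumS; last by lia.
rewrite [in RHS]binom_psumS; last by lia.
rewrite [in RHS]binom_psumS; last by lia.
by rewrite IH addnS /= -(prednK s0) binS natrD exprS /=; ring.
Qed.

Lemma binom_psum_cvg t s : 0 <= t < 1 -> (0 < s)%N ->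
  binom_psum t s @ \oo --> (t / (1 - t)) ^+ s.
Proof.
move=> t01; have t0 : 0 <= t by case/andP: t01.
elim: s => // -[_ _|s IH _].
  rewrite expr1 -[X in X / _]mulr1.
  apply: (cvg_affine_recursion (v := fun=> 1) (N0 := 1%N) t01 (binom_psum_nd 1 t0) (cvg_cst _)).
  exact: binom_psum1_rec.
rewrite exprS mulrAC.
apply: (cvg_affine_recursion (N0 := s.+2) t01 (binom_psum_nd _ t0) (IH isT)).
by move=> N; apply: binom_psumS_rec.
Qed.

Lemma binom_psum_invX_cvg (r : R) i s : 1 < r -> (0 < i)%N -> (0 < s)%N ->
  binom_psum (r ^+ i)^-1 s @ \oo --> (r ^+ i - 1)^-s.
Proof.
move=> r1 i0 s0.
have ri1 : 1 < r ^+ i by rewrite exprn_egt1 // -lt0n.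
have ri0 : r ^+ i != 0 by rewrite gt_eqF // (lt_trans ltr01).
have -> : (r ^+ i - 1)^-s = ((r ^+ i)^-1 / (1 - (r ^+ i)^-1)) ^+ s.
  by rewrite -exprVn; congr (_ ^+ _); field; rewrite ri0 subr_eq0 gt_eqF.
apply: binom_psum_cvg => //.
by rewrite invr_ge0 ltW ?(lt_trans ltr01) //= invf_lt1 // (lt_trans ltr01).
Qed.

End binomial_series.

Section series_bounds.
Variable R : realType.

Lemma cvg_sum_nat {T} (F : set_system T) {FF : Filter F} m n (g : nat -> T -> R)
    (l : nat -> R) :
  (forall i, (m <= i < n)%N -> g i t @[t --> F] --> l i) ->
  \sum_(m <= i < n) g i t @[t --> F] --> \sum_(m <= i < n) l i.
Proof.
move=> gl; rewrite big_nat_cond.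
have -> : (fun t => \sum_(m <= i < n) g i t) =
    (fun t => \sum_(m <= i < n | (m <= i < n)%N && true) g i t).
  by apply/funext => t; rewrite big_nat_cond.
by apply: cvg_big => [|i /andP[/gl]]; first exact: add_continuous.
Qed.

Lemma cvg_sum_dominated (F G : R ^nat) s g : (forall n, `|F n| <= G n) ->
  (fun N => \sum_(s <= n < N) G n) @ \oo --> g ->
  cvgn (fun N => \sum_(s <= n < N) F n) /\ `|limn (fun N => \sum_(s <= n < N) F n)| <= g.
Proof.
move=> FG Gg.
pose cut (H : R ^nat) n := if (s <= n)%N then H n else 0.
have sum_cut H : (fun N => \sum_(s <= n < N) H n) = series (cut H).
  apply/funext => N; rewrite seriesEnat /= (big_nat_widenl _ _ _ _ _ (leq0n s)).
  by rewrite big_mkcond.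
rewrite sum_cut; rewrite sum_cut in Gg.
have cutF_le n : `|cut F n| <= cut G n by rewrite /cut; case: ifP; rewrite ?normr0.
have cutF_cvg : cvgn [normed series (cut F)].
  apply: (series_le_cvg (fun n => normr_ge0 _) _ cutF_le); last by apply/cvg_ex; exists g.
  by move=> n; exact: le_trans (cutF_le n).
split; first exact: normed_cvg.
apply: le_trans (lim_series_norm cutF_cvg) _; rewrite -(cvg_lim _ Gg) //.
by apply: lim_series_le => //; apply/cvg_ex; exists g.
Qed.

Lemma geometric_tail_le (rho : R) a N : 0 <= rho <= 2^-1 ->
  \sum_(a <= i < N) rho ^+ i <= 2 * rho ^+ a.
Proof.
move=> /andP[rho0 rho_half].
have rhoa0 : 0 <= rho ^+ a by exact: exprn_ge0.
have [aN|Na] := leqP a N; last by rewrite big_geq ?(ltnW Na) // mulr_ge0.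
have rho1 : rho < 1 by apply: le_lt_trans rho_half _; rewrite invf_lt1 ?ltr1n.
rewrite -(subnKC aN) geometric_partial_tail geometric_seriesE ?lt_eqF //=.
rewrite ler_pdivrMr ?subr_gt0 //; apply: le_trans (_ : rho ^+ a <= _).
  by rewrite ler_piMr // lerBlDr lerDl exprn_ge0.
rewrite mulrAC -[leLHS]mul1r ler_wpM2r //.
have : rho * 2 <= 1 by rewrite -ler_pdivlMr // mul1r.
lra.
Qed.

Definition logf (c : nat -> R) (y : R) := limn (logf_partial c y).

Lemma logf_partialS_sub (c : nat -> R) y i : (0 < i)%N ->
  logf_partial c y i.+1 - logf_partial c y i = c i * y ^+ i.
Proof. by move=> i0; rewrite /logf_partial big_nat_recr //= addrAC subrr add0r. Qed.

Lemma logf_coef_bounded (c : nat -> R) x : cvgn (logf_partial c x) ->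
  exists M, forall i, (0 < i)%N -> `|c i * x ^+ i| <= M.
Proof.
move=> /cvg_has_ub [B B_ub].
have partial_le n : `|logf_partial c x n| <= B by apply: B_ub; exists n.
exists (2 * B) => i i0; rewrite -logf_partialS_sub //.
apply: le_trans (ler_normB _ _) _.
by rewrite mulr_natl mulr2n lerD.
Qed.

Lemma logf_remainder_le (c : nat -> R) x M k rho :
  (forall i, (0 < i)%N -> `|c i * x ^+ i| <= M) ->
  cvgn (logf_partial c (rho * x)) -> 0 <= rho <= 2^-1 ->
  `|logf c (rho * x) - \sum_(1 <= i < k.+1) c i * (rho * x) ^+ i|
     <= 2 * M * rho ^+ k.+1.
Proof.
move=> cM cvg_rho /[dup] rho01 /andP[rho0 _].
set P := \sum_(_ <= _ < _) _.
have dist_cvg : (fun N => `|logf_partial c (rho * x) N - P|) @ \oo --> `|logf c (rho * x) - P|.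
  by apply: cvg_norm; apply: cvgB; [exact: cvg_rho | exact: cvg_cst].
rewrite -(cvg_lim _ dist_cvg) //; apply: limr_le; first exact: cvgP dist_cvg.
near=> N; have kN : (k.+1 <= N)%N by near: N; exact: nbhs_infty_ge.
rewrite /logf_partial (@big_cat_nat _ _ _ k.+1) //= addrAC subrr add0r.
apply: le_trans (ler_norm_sum _ _ _) _.
apply: le_trans (_ : \sum_(k.+1 <= i < N) M * rho ^+ i <= _); last first.
  by rewrite -mulr_sumr -mulrA mulrCA ler_wpM2l ?geometric_tail_le // (le_trans _ (cM 1%N _)).
rewrite big_nat_cond [X in _ <= X]big_nat_cond; apply: ler_sum => i /andP[/andP[ki _] _].
rewrite exprMn mulrCA normrM normrX ger0_norm // mulrC ler_wpM2r ?exprn_ge0 //.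
by apply: cM; exact: leq_trans ki.
Unshelve. all: by end_near.
Qed.

End series_bounds.

Section root_gap.
Variable R : realType.
Implicit Types (r : R) (i j : nat).

Definition root_gap j r : R := (r ^+ j - 1) `^ (j%:R^-1).

Definition gap_ratio j i r : R := root_gap j r ^+ i / (r ^+ i - 1).

Lemma root_gap_ge0 j r : 0 <= root_gap j r.
Proof. exact: powR_ge0. Qed.

Lemma root_gapX j r : (0 < j)%N -> 1 <= r -> root_gap j r ^+ j = r ^+ j - 1.
Proof.
move=> j0 r1; rewrite /root_gap -powR_mulrn ?powR_ge0 // -powRrM.
by rewrite mulVf ?pnatr_eq0 -?lt0n // powRr1 // subr_ge0 exprn_ege1.
Qed.

Lemma gap_ratio_id i r : (0 < i)%N -> 1 < r -> gap_ratio i i r = 1.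
Proof.
move=> i0 r1; rewrite /gap_ratio root_gapX ?ltW // divff // subr_eq0 gt_eqF //.
by rewrite exprn_egt1 // -lt0n.
Qed.

Lemma gap_ratio_le j i r : (0 < j)%N -> (j < i)%N -> 1 < r ->
  0 <= gap_ratio j i r <= root_gap j r ^+ (i - j).
Proof.
move=> j0 ji r1.
have ri : 0 < r ^+ i - 1 by rewrite subr_gt0 exprn_egt1 // -lt0n (ltn_trans j0).
have rj : 0 <= r ^+ j - 1 by rewrite subr_ge0 exprn_ege1 // ltW.
have rji : r ^+ j - 1 <= r ^+ i - 1 by rewrite lerD2r ler_weXn2l ?ltW // ltnW.
have -> : gap_ratio j i r = root_gap j r ^+ (i - j) * ((r ^+ j - 1) / (r ^+ i - 1)).
  by rewrite /gap_ratio -(root_gapX j0 (ltW r1)) mulrA -exprD subnK // ltnW.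
rewrite mulr_ge0 ?exprn_ge0 ?root_gap_ge0 ?divr_ge0 ?(ltW ri) //=.
by rewrite ler_piMr ?exprn_ge0 ?root_gap_ge0 // ler_pdivrMr // mul1r.
Qed.

Lemma root_gap_cvg0 j : (0 < j)%N -> root_gap j r @[r --> (1 : R)^'+] --> 0.
Proof.
move=> j0; apply/cvgr0Pnorm_le => e e0.
have gap_cvg0 : (fun r : R => r ^+ j - 1) @ (1 : R)^'+ --> 0.
  apply: cvg_at_right_filter.
  rewrite -[X in _ --> X](subrr (1 : R)) -[X in _ --> X - _](expr1n R j).
  by apply: cvgB; [exact: exprn_continuous | exact: cvg_cst].
near=> r.
have r1 : 1 < r by near: r; exact: nbhs_right_gt.
have gap_lt : r ^+ j - 1 < e ^+ j by near: r; exact: cvgr_lt gap_cvg0 _ (exprn_gt0 _ e0).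
rewrite ger0_norm ?root_gap_ge0 // -(ler_pXn2r j0) ?nnegrE ?root_gap_ge0 ?ltW //.
by rewrite root_gapX ?ltW.
Unshelve. all: by end_near.
Qed.

Lemma gap_ratio_cvg0 j i : (0 < j)%N -> (j < i)%N ->
  gap_ratio j i r @[r --> (1 : R)^'+] --> 0.
Proof.
move=> j0 ji.
have gapX_cvg0 : root_gap j r ^+ (i - j) @[r --> (1 : R)^'+] --> 0.
  have := cvg_comp _ _ (root_gap_cvg0 j0) (@exprn_continuous R (i - j) 0).
  by rewrite expr0n subn_eq0 leqNgt ji.
apply: (squeeze_cvgr _ (cvg_cst 0) gapX_cvg0).
near=> r; apply: gap_ratio_le => //; near: r; exact: nbhs_right_gt.
Unshelve. all: by end_near.
Qed.

Lemma near_root_gap_le_half k : \forall r \near (1 : R)^'+,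
  1 < r /\ forall j : 'I_k, (0 < j)%N -> root_gap j r <= 2^-1.
Proof.
near=> r; split; first by near: r; exact: nbhs_right_gt.
near: r; apply: filter_forall => j.
have [j0|j0] := posnP j; first by apply: nearW => r; rewrite j0.
have half_gt0 : (0 : R) < 2^-1 by rewrite invr_gt0.
near=> r => _; apply: ltW; near: r; exact: cvgr_lt (root_gap_cvg0 j0) _ half_gt0.
Unshelve. all: by end_near.
Qed.

Lemma prod_root_gapX_div (I : finType) (A : {set I}) (w : I -> nat) i r :
  (\prod_(j in A) root_gap (w j) r) ^+ i * (r ^+ i - 1)^-#|A|
  = \prod_(j in A) gap_ratio (w j) i r.
Proof. by rewrite -prodrXl -exprVn -prodr_const -big_split. Qed.

End root_gap.

Definition Pf_main_term (R : realType) (c : nat -> R) (x : R) k (A : {set 'I_k.+1})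
    (r : R) : R :=
  \sum_(1 <= i < k.+1) c i * x ^+ i * \prod_(j in A) gap_ratio j i r.

Section max_is_k_facts.
Variables (k : nat) (A : {set 'I_k.+1}).
Hypothesis Ak : max_is_k A.

Lemma max_is_k_mem_gt0 (j : 'I_k.+1) : j \in A -> (0 < j)%N.
Proof.
case/andP: Ak => _ A0 jA; rewrite lt0n; apply: contraNneq A0 => j0.
by rewrite -(_ : j = ord0) //; apply: val_inj.
Qed.

Lemma max_is_k_card_gt0 : (0 < #|A|)%N.
Proof. by apply/card_gt0P; exists ord_max; case/andP: Ak. Qed.

End max_is_k_facts.

Section Pf_expansion.
Variables (R : realType) (f : R -> R) (c : nat -> R) (x M : R).
Hypothesis f_ser : forall y, between0 x y ->
  cvgn (logf_partial c y) /\ f y = expR (logf c y).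
Hypothesis cM : forall i, (0 < i)%N -> `|c i * x ^+ i| <= M.

Lemma between0_scale rho : 0 <= rho <= 2^-1 -> between0 x (rho * x).
Proof.
move=> /andP[rho0 rho_half].
have rho1 : rho <= 1 by apply: le_trans rho_half _; rewrite invf_le1 ?ler1n.
rewrite /between0 /= ge_min le_max.
have [x0|x0] := leP 0 x; first by rewrite mulr_ge0 ?ler_piMl ?orbT.
have xrho_le0 : rho * x <= 0 by rewrite mulr_ge0_le0 // ltW.
have x_le_xrho : x <= rho * x by rewrite -[leLHS]mul1r ler_wnM2r // ltW.
by rewrite xrho_le0 x_le_xrho !orbT.
Qed.

Lemma div_exprn_le_half (lam r : R) n : 0 <= lam <= 2^-1 -> 1 < r ->
  0 <= lam / r ^+ n <= 2^-1.
Proof.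
move=> /andP[lam0 lam_half] r1.
have rn0 : 0 < r ^+ n := exprn_gt0 _ (lt_trans ltr01 r1).
rewrite divr_ge0 ?(ltW rn0) //=; apply: le_trans lam_half.
by rewrite ler_pdivrMr // ler_peMr // exprn_ege1 // (ltW r1).
Qed.

Lemma binom_logf_sum_cvg k lam r s : 0 <= lam <= 2^-1 -> 1 < r -> (0 < s)%N ->
  exists2 E, `|E| <= 2 * M * lam ^+ k.+1 * (r ^+ k.+1 - 1)^-s &
  (fun N => \sum_(s <= n < N) 'C(n.-1, s.-1)%:R * logf c (lam / r ^+ n * x)) @ \oo -->
    \sum_(1 <= i < k.+1) c i * (lam * x) ^+ i * (r ^+ i - 1)^-s + E.
Proof.
move=> lam01 r1 s0.
have rho_n n := div_exprn_le_half n lam01 r1.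
have cvg_n n := (f_ser (between0_scale (rho_n n))).1.
have powX i n : (lam / r ^+ n) ^+ i = lam ^+ i * ((r ^+ i)^-1) ^+ n.
  by rewrite exprMn; congr (_ * _); rewrite !exprVn -!exprM mulnC.
pose rem n := logf c (lam / r ^+ n * x) -
  \sum_(1 <= i < k.+1) c i * (lam / r ^+ n * x) ^+ i.
pose K := 2 * M * lam ^+ k.+1.
have rem_le n : `|'C(n.-1, s.-1)%:R * rem n| <=
    K * ('C(n.-1, s.-1)%:R * ((r ^+ k.+1)^-1) ^+ n).
  rewrite normrM ger0_norm // mulrCA ler_wpM2l //.
  by rewrite /K -!mulrA -powX mulrA (logf_remainder_le k cM (cvg_n n) (rho_n n)).
have [rem_cvg rem_lim_le] : cvgn (fun N => \sum_(s <= n < N) 'C(n.-1, s.-1)%:R * rem n) /\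
    `|limn (fun N => \sum_(s <= n < N) 'C(n.-1, s.-1)%:R * rem n)|
      <= K * (r ^+ k.+1 - 1)^-s.
  apply: (cvg_sum_dominated rem_le); under eq_cvg do rewrite -mulr_sumr.
  by apply: cvgM; [exact: cvg_cst | exact: binom_psum_invX_cvg].
exists (limn (fun N => \sum_(s <= n < N) 'C(n.-1, s.-1)%:R * rem n)) => //.
have sum_split N : \sum_(s <= n < N) 'C(n.-1, s.-1)%:R * logf c (lam / r ^+ n * x) =
    \sum_(1 <= i < k.+1) c i * (lam * x) ^+ i * binom_psum (r ^+ i)^-1 s N +
    \sum_(s <= n < N) 'C(n.-1, s.-1)%:R * rem n.
  have -> : \sum_(1 <= i < k.+1) c i * (lam * x) ^+ i * binom_psum (r ^+ i)^-1 s N =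
      \sum_(s <= n < N) \sum_(1 <= i < k.+1)
        'C(n.-1, s.-1)%:R * (c i * (lam / r ^+ n * x) ^+ i).
    rewrite [RHS]exchange_big /=; apply: eq_bigr => i _.
    rewrite /binom_psum mulr_sumr; apply: eq_bigr => n _.
    by rewrite [(lam / _ * x) ^+ _]exprMn powX exprMn; ring.
  rewrite -big_split /=; apply: eq_bigr => n _.
  by rewrite -mulr_sumr -mulrDr /rem addrC subrK.
under eq_cvg do rewrite sum_split.
apply: cvgD => //; apply: cvg_sum_nat => i /andP[i0 _].
by apply: cvgM; [exact: cvg_cst | exact: binom_psum_invX_cvg].
Qed.

Lemma Pf_partial_cvg k (A : {set 'I_k.+1}) r : max_is_k A -> 1 < r ->
  (forall j : 'I_k.+1, (0 < j)%N -> root_gap j r <= 2^-1) ->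
  exists2 E, `|E| <= 2 * M * \prod_(j in A) gap_ratio j k.+1 r &
    Pf_partial f A r x @ \oo --> expR (Pf_main_term c x A r + E).
Proof.
move=> Ak r1 gap_le.
set lam := \prod_(j in A) root_gap j r.
have gap_le1 j : j \in A -> 0 <= root_gap j r <= 1.
  move=> jA; rewrite root_gap_ge0 (le_trans (gap_le _ (max_is_k_mem_gt0 Ak jA))) //.
  by rewrite invf_le1 ?ler1n.
have lam01 : 0 <= lam <= 2^-1.
  have kA : ord_max \in A by case/andP: Ak.
  have lam0 : 0 <= lam by apply: prodr_ge0 => j _; exact: root_gap_ge0.
  rewrite lam0 /lam (bigD1 ord_max) //= -[leRHS]mulr1.
  apply: ler_pM; first exact: root_gap_ge0.
  - by apply: prodr_ge0 => j _; exact: root_gap_ge0.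
  - exact: gap_le (max_is_k_mem_gt0 Ak kA).
  - by apply: prodr_ile1 => j /andP[jA _]; exact: gap_le1.
have [E E_le E_cvg] := binom_logf_sum_cvg k lam01 r1 (max_is_k_card_gt0 Ak).
exists E; first by rewrite -prod_root_gapX_div mulrA.
have -> : Pf_partial f A r x =
    (fun N => expR (\sum_(#|A| <= n < N) 'C(n.-1, #|A|.-1)%:R * logf c (lam / r ^+ n * x))).
  apply/funext => N; rewrite /Pf_partial expR_sum; apply: eq_bigr => n _.
  rewrite expRM_natl /x_n mulrAC.
  by rewrite (f_ser (between0_scale (div_exprn_le_half n lam01 r1))).2.
have -> : Pf_main_term c x A r =
    \sum_(1 <= i < k.+1) c i * (lam * x) ^+ i * (r ^+ i - 1)^-#|A|.
  by apply: eq_bigr => i _; rewrite -prod_root_gapX_div exprMn; ring.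
exact: cvg_comp _ _ E_cvg (@continuous_expR R _).
Qed.

End Pf_expansion.

Section signed_sum.
Variables (R : realType) (k : nat).
Hypothesis k_gt0 : (0 < k)%N.

Definition max_sign (A : {set 'I_k.+1}) : R := (-1) ^+ #|A|.-1.

Lemma max_signE (A : {set 'I_k.+1}) : max_is_k A ->
  max_sign A = if odd #|A| then 1 else -1.
Proof.
move=> /max_is_k_card_gt0; rewrite /max_sign; case: #|A| => // n _ /=.
by rewrite -signr_odd; case: (odd n).
Qed.

Lemma ord0_neq_max : (ord0 : 'I_k.+1) != ord_max.
Proof. by apply/eqP => /(congr1 val) /= k0; move: k_gt0; rewrite -k0. Qed.

Definition signed_factor (h : nat -> R) (j : 'I_k.+1) : R :=
  if j == ord0 then 1 else if j == ord_max then h j else 1 - h j.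

(* Expand prod_j (in_f j + out_f j) over the subsets J of 'I_k.+1: the zero
   values in_f ord0 and out_f ord_max kill every J that is not max_is_k. *)
Lemma sum_max_sign_prod (h : nat -> R) :
  \sum_(A : {set 'I_k.+1} | max_is_k A) max_sign A * \prod_(j in A) h j
  = \prod_(j : 'I_k.+1) signed_factor h j.
Proof.
pose in_f (j : 'I_k.+1) : R := if j == ord0 then 0 else if j == ord_max then h j else - h j.
pose out_f (j : 'I_k.+1) : R := if j == ord_max then 0 else 1.
have -> : \prod_(j : 'I_k.+1) signed_factor h j = \prod_(j : 'I_k.+1) (in_f j + out_f j).
  apply: eq_bigr => j _; rewrite /signed_factor /in_f /out_f.
  case: eqP => [->|_]; first by rewrite (negPf ord0_neq_max) add0r.
  by case: eqP => _; rewrite ?addr0 // addrC.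
rewrite bigA_distr [RHS](bigID (@max_is_k k)) /= [X in _ = _ + X]big1 ?addr0; last first.
  move=> J; rewrite /max_is_k negb_and negbK => /orP[Jk|J0].
    by rewrite (bigD1 ord_max) //= (negPf Jk) /out_f eqxx mul0r.
  by rewrite (bigD1 ord0) //= J0 /in_f eqxx mul0r.
apply: eq_bigr => A /andP[Ak A0].
rewrite [RHS](bigID (mem A)) /= [X in _ = _ * X]big1 ?mulr1; last first.
  by move=> j jA; rewrite (negPf jA) /out_f; case: eqP => // jk; rewrite jk Ak in jA.
rewrite [RHS](eq_bigr in_f); last by move=> j ->.
rewrite (big_setD1 ord_max Ak) [in RHS](big_setD1 ord_max Ak) /=.
have -> : in_f ord_max = h k by rewrite /in_f eq_sym (negPf ord0_neq_max) eqxx.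
rewrite [in RHS](eq_bigr (fun j : 'I_k.+1 => - h j)); last first.
  move=> j; rewrite in_setD1 /in_f => /andP[/negPf -> jA].
  by case: eqP => // j0; rewrite -j0 jA in A0.
by rewrite prodrN /max_sign (cardsD1 ord_max A) Ak /=; ring.
Qed.

Lemma signed_factor_gap_ratio_cvg :
  (fun r => \prod_(j : 'I_k.+1) signed_factor (fun j => gap_ratio j k r) j)
    @ (1 : R)^'+ --> (1 : R).
Proof.
have prod1 : \prod_(j : 'I_k.+1) (1 : R) = 1 by rewrite big1_eq.
rewrite -[X in _ --> X]prod1.
apply: cvg_big => [|j _]; first exact: mul_continuous.
rewrite /signed_factor; have [_|j0] := eqVneq j ord0; first exact: cvg_cst.
have [->|jk] := eqVneq j ord_max.
  apply: cvg_trans _ (cvg_cst (F := (1 : R)^'+) (1 : R)); apply: near_eq_cvg.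
  by near=> r; rewrite gap_ratio_id //; near: r; exact: nbhs_right_gt.
have j_gt0 : (0 < j)%N by move: j0; rewrite -val_eqE lt0n.
have j_lt_k : (j < k)%N by move: jk (ltn_ord j); rewrite -val_eqE /= ltnS leq_eqVlt => /negPf ->.
rewrite -[X in _ --> X]subr0.
exact: cvgB (cvg_cst _) (gap_ratio_cvg0 j_gt0 j_lt_k).
Unshelve. all: by end_near.
Qed.

Lemma signed_factor_gap_ratio_eq0 i r : (0 < i < k)%N -> 1 < r ->
  \prod_(j : 'I_k.+1) signed_factor (fun j => gap_ratio j i r) j = 0.
Proof.
move=> /andP[i0 ik] r1; have ik1 : (i < k.+1)%N by exact: ltnW.
rewrite (bigD1 (inord i)) //= /signed_factor -!val_eqE /= inordK //.
by rewrite gtn_eqF // ltn_eqF // gap_ratio_id // subrr mul0r.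
Qed.

Lemma sum_max_sign_gap_ratio_cvg i : (0 < i <= k)%N ->
  (fun r => \sum_(A : {set 'I_k.+1} | max_is_k A) max_sign A * \prod_(j in A) gap_ratio j i r)
    @ (1 : R)^'+ --> ((i == k)%:R : R).
Proof.
move=> /andP[i0 ik].
have sum_eq r : \sum_(A : {set 'I_k.+1} | max_is_k A) max_sign A * \prod_(j in A) gap_ratio j i r
    = \prod_(j : 'I_k.+1) signed_factor (fun j => gap_ratio j i r) j.
  exact: sum_max_sign_prod.
under eq_cvg do rewrite sum_eq.
move: ik; rewrite leq_eqVlt => /orP[/eqP->|ik]; first by rewrite eqxx; exact: signed_factor_gap_ratio_cvg.
rewrite ltn_eqF //; apply: cvg_trans _ (cvg_cst (F := (1 : R)^'+) (0 : R)); apply: near_eq_cvg.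
by near=> r; rewrite /= signed_factor_gap_ratio_eq0 ?i0 //; near: r; exact: nbhs_right_gt.
Unshelve. all: by end_near.
Qed.

End signed_sum.

Arguments max_sign {R k} A.

Lemma prod_gap_ratio_cvg0 (R : realType) k (A : {set 'I_k.+1}) : max_is_k A ->
  (fun r => \prod_(j in A) gap_ratio j k.+1 r) @ (1 : R)^'+ --> (0 : R).
Proof.
move=> Ak; have kA : ord_max \in A by case/andP: Ak.
rewrite -(mul0r (\prod_(j in A :\ ord_max) (0 : R))) -(big_setD1 _ kA).
apply: cvg_big => [|j jA]; first exact: mul_continuous.
exact: gap_ratio_cvg0 (max_is_k_mem_gt0 Ak jA) (ltn_ord j).
Qed.

Lemma odd_even_prod_ratio_expR (R : realType) k (P : {set 'I_k.+1} -> R) :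
  (forall A, max_is_k A -> 0 < P A) ->
  (\prod_(A : {set 'I_k.+1} | max_is_k A && odd #|A|) P A) /
  (\prod_(A : {set 'I_k.+1} | max_is_k A && ~~ odd #|A|) P A)
  = expR (\sum_(A : {set 'I_k.+1} | max_is_k A) max_sign A * ln (P A)).
Proof.
move=> P_gt0.
have prod_expR (Q : pred {set 'I_k.+1}) : (forall A, Q A -> max_is_k A) ->
    \prod_(A | Q A) P A = expR (\sum_(A | Q A) ln (P A)).
  by move=> QA; rewrite expR_sum; apply: eq_bigr => A /QA /P_gt0 P0; rewrite lnK.
rewrite !prod_expR => [|A /andP[] //|A /andP[] //].
rewrite -expRN -expRD [in RHS](bigID (fun A : {set 'I_k.+1} => odd #|A|)) /= -sumrN.
congr (expR (_ + _)); apply: eq_bigr => A /andP[Ak oddA]; rewrite max_signE //.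
  by rewrite oddA mul1r.
by rewrite (negPf oddA) mulN1r.
Qed.

Section signed_log_Pf.
Variables (R : realType) (f : R -> R) (c : nat -> R) (x M : R) (k : nat).
Hypothesis f_ser : forall y, between0 x y ->
  cvgn (logf_partial c y) /\ f y = expR (logf c y).
Hypothesis cM : forall i, (0 < i)%N -> `|c i * x ^+ i| <= M.
Hypothesis k_gt0 : (0 < k)%N.

Lemma near_Pf_partial_cvg : \forall r \near (1 : R)^'+,
  forall A : {set 'I_k.+1}, max_is_k A ->
  exists2 E, `|E| <= 2 * M * \prod_(j in A) gap_ratio j k.+1 r &
    Pf_partial f A r x @ \oo --> expR (Pf_main_term c x A r + E).
Proof.
near=> r => A Ak.
have [r1 gap_le] : 1 < r /\ forall j : 'I_k.+1, (0 < j)%N -> root_gap j r <= 2^-1.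
  by near: r; exact: near_root_gap_le_half.
exact: Pf_partial_cvg.
Unshelve. all: by end_near.
Qed.

Lemma ln_Pf_sub_main_cvg0 (A : {set 'I_k.+1}) : max_is_k A ->
  (fun r => ln (Pf f A r x) - Pf_main_term c x A r) @ (1 : R)^'+ --> (0 : R).
Proof.
move=> Ak; pose U r := 2 * M * \prod_(j in A) gap_ratio j k.+1 r.
have U_cvg0 : U r @[r --> (1 : R)^'+] --> 0.
  have := cvgM (cvg_cst (2 * M)) (prod_gap_ratio_cvg0 (R := R) Ak).
  by rewrite mulr0; apply.
apply: (@squeeze_cvgr _ _ _ _ (fun r => - U r) U); last exact: U_cvg0.
  near=> r.
  have [E E_le E_cvg] : exists2 E, `|E| <= U r &
      Pf_partial f A r x @ \oo --> expR (Pf_main_term c x A r + E).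
    by near: r; apply: filterS near_Pf_partial_cvg => r /(_ A Ak).
  by rewrite -ler_norml /Pf (cvg_lim _ E_cvg) // expRK addrC addKr.
by rewrite -oppr0; exact: cvgN.
Unshelve. all: by end_near.
Qed.

Lemma sum_max_sign_main_term_cvg :
  (fun r => \sum_(A : {set 'I_k.+1} | max_is_k A) max_sign A * Pf_main_term c x A r)
    @ (1 : R)^'+ --> c k * x ^+ k.
Proof.
have swap r : \sum_(A : {set 'I_k.+1} | max_is_k A) max_sign A * Pf_main_term c x A r =
    \sum_(1 <= i < k.+1) c i * x ^+ i *
      \sum_(A : {set 'I_k.+1} | max_is_k A) max_sign A * \prod_(j in A) gap_ratio j i r.
  rewrite /Pf_main_term; under eq_bigr do rewrite mulr_sumr.
  rewrite exchange_big /=; apply: eq_bigr => i _.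
  by rewrite mulr_sumr; apply: eq_bigr => A _; ring.
have -> : c k * x ^+ k = \sum_(1 <= i < k.+1) c i * x ^+ i * (i == k)%:R.
  rewrite big_nat_recr //= eqxx mulr1 big_nat_cond big1 ?add0r // => i /andP[/andP[_ ik] _].
  by rewrite ltn_eqF // mulr0.
rewrite (funext swap); apply: cvg_sum_nat => i /andP[i0 ik].
by apply: cvgM (cvg_cst _) _; apply: sum_max_sign_gap_ratio_cvg; rewrite ?i0.
Qed.

Lemma sum_max_sign_ln_Pf_cvg :
  (fun r => \sum_(A : {set 'I_k.+1} | max_is_k A) max_sign A * ln (Pf f A r x))
    @ (1 : R)^'+ --> c k * x ^+ k.
Proof.
have split r : \sum_(A : {set 'I_k.+1} | max_is_k A) max_sign A * ln (Pf f A r x) =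
    \sum_(A : {set 'I_k.+1} | max_is_k A) max_sign A * Pf_main_term c x A r +
    \sum_(A : {set 'I_k.+1} | max_is_k A)
      max_sign A * (ln (Pf f A r x) - Pf_main_term c x A r).
  by rewrite -big_split /=; apply: eq_bigr => A _; rewrite -mulrDr addrC subrK.
rewrite (funext split).
rewrite -[X in _ --> X]addr0; apply: cvgD; first exact: sum_max_sign_main_term_cvg.
have sum0 : \sum_(A : {set 'I_k.+1} | max_is_k A) max_sign A * 0 = 0 :> R.
  by rewrite big1 // => A _; rewrite mulr0.
rewrite -[X in _ --> X]sum0; apply: cvg_big => [|A Ak]; first exact: add_continuous.
exact: cvgM (cvg_cst _) (ln_Pf_sub_main_cvg0 Ak).
Qed.

End signed_log_Pf.

Theorem lemma5 (R : realType) (f : R -> R) (c : nat -> R) (x : R)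
  (f_an : forall y, between0 x y -> analytic_at f y)
  (f_nz : forall y, between0 x y -> f y != 0)
  (f0 : f 0 = 1)
  (f_ser : forall y, between0 x y ->
     cvgn (logf_partial c y) /\ f y = expR (limn (logf_partial c y)))
  (k : nat) (k_gt0 : (0 < k)%N) :
  (\forall r \near (1 : R)^'+, forall A : {set 'I_k.+1}, max_is_k A -> cvgn (Pf_partial f A r x)) /\
  (fun r : R => Pf_ratio f k r x) @ (1 : R)^'+ --> f_component c k x.
Proof.
have x_between : between0 x x by rewrite /between0 /= ge_min le_max !lexx !orbT.
have [M cM] := logf_coef_bounded (f_ser x x_between).1.
have Pf_near := near_Pf_partial_cvg k f_ser cM.
split; first by apply: filterS Pf_near => r Pf_cvg A /Pf_cvg [E _ /cvgP].
have ratioE : {near (1 : R)^'+, (fun r => expR (\sum_(A : {set 'I_k.+1} | max_is_k A)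
    max_sign A * ln (Pf f A r x))) =1 (fun r => Pf_ratio f k r x)}.
  apply: filterS Pf_near => r Pf_cvg; rewrite /Pf_ratio odd_even_prod_ratio_expR //.
  by move=> A /Pf_cvg [E _ /cvg_lim E_lim]; rewrite /Pf E_lim ?expR_gt0.
apply: cvg_trans (near_eq_cvg ratioE) _.
exact: cvg_comp _ _ (sum_max_sign_ln_Pf_cvg f_ser cM k_gt0) (@continuous_expR R _).
Qed.
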